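(* Let $m\ge 2$ be an integer and let $n$ be a positive integer with $m^j\le n<m^{j+1}$ for some integer $j\ge 0$, with base $m$ representation $n=\alpha_j m^j+\cdots+\alpha_1 m+\alpha_0$ ($\alpha_j>0$, $0\le\alpha_i\le m-1$). Then the number $b_m(n)$ of $m$-ary partitions of $n$ satisfies \[ b_m(n)=\sum_{k_j=0}^{\alpha_j}\ \sum_{k_{j-1}=0}^{\alpha_{j-1}+mk_j}\cdots\sum_{k_1=0}^{\alpha_1+mk_2}1, \] i.e. $b_m(n)$ is the number of integer tuples $(k_j,\ldots,k_1)$ with $0\le k_j\le\alpha_j$ and $0\le k_t\le \alpha_t+mk_{t+1}$ for $1\le t\le j-1$. In particular $b_m(n)=1$ when $j=0$.
   Context: An $m$-ary partition of a positive integer $n$ is a partition of $n$ in which every part is a power of $m$ (i.e. one of $1,m,m^2,\ldots$). $b_m(n)$ denotes the number of $m$-ary partitions of $n$. *)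

From mathcomp Require Import all_boot.
Set Implicit Arguments. Unset Strict Implicit. Unset Printing Implicit Defensive.

(* x is a power of m : x = m ^ k for some k (k <= x suffices as a bound when m >= 2) *)
Definition is_pow (m x : nat) : bool := [exists k : 'I_x.+1, x == m ^ k].

Definition is_mary_partition (m n : nat) (s : seq nat) : bool :=
  [&& sorted geq s, all (fun x => 0 < x) s, sumn s == n & all (is_pow m) s].

Fixpoint lists_upto (l : nat) (xs : seq nat) : seq (seq nat) :=
  [::] :: (if l is l'.+1 then [seq x :: s | x <- xs, s <- lists_upto l' xs] else [::]).

(* b_m(n): number of m-ary partitions of n.  Any partition of n has at most n parts,
   each in {1..n}, so it occurs exactly once in lists_upto n (iota 1 n). *)
Definition b (m n : nat) : nat :=
  count (is_mary_partition m n) (lists_upto n (iota 1 n)).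

Definition digit (m n i : nat) : nat := (n %/ m ^ i) %% m.

Fixpoint nested_sum (m n t c : nat) : nat :=
  if t is t'.+1 then
    \sum_(0 <= k < c.+1) nested_sum m n t' (digit m n t' + m * k)
  else 1.

From mathcomp Require Import all_boot zify.

(** Listed in decreasing order, an m-ary partition of N with parts at most
    m^(t+1) consists of a copies of m^(t+1), for some a <= N / m^(t+1),
    followed by an m-ary partition of N - a m^(t+1) with parts at most m^t.
    This gives a duplicate-free enumeration whose size obeys
    #(t+1, N) = \sum_(a <= N / m^(t+1)) #(t, N - a m^(t+1)) and #(0, N) = 1.
    Writing N = c m^(t+1) + (n mod m^(t+1)) and k = c - a, the remainder
    N - a m^(t+1) equals (alpha_t + m k) m^t + (n mod m^t), so the counts
    satisfy the recursion of the nested sum; and n = alpha_j m^j + (n mod m^j)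
    when n < m^(j+1). *)

Set Implicit Arguments.
Unset Strict Implicit.
Unset Printing Implicit Defensive.

Lemma leq_sumn_mem x s : x \in s -> x <= sumn s.
Proof.
elim: s => //= y s IHs; rewrite inE => /predU1P[-> | /IHs x_le].
  exact: leq_addr.
exact: leq_trans x_le (leq_addl _ _).
Qed.

Lemma size_le_sumn s : all (fun x => 0 < x) s -> size s <= sumn s.
Proof.
by elim: s => //= x s IHs /andP[x_gt0 /IHs]; rewrite -add1n; apply: leq_add.
Qed.

Lemma sorted_geq_nseq_cat a x s :
  sorted geq s -> all (geq x) s -> sorted geq (nseq a x ++ s).
Proof.
move=> s_sorted s_le; elim: a => //= a IHa.
rewrite (path_sortedE (rev_trans leq_trans)) IHa andbT all_cat s_le andbT.
by rewrite all_nseq /= leqnn orbT.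
Qed.

Lemma nseq_cat_inj (T : eqType) (x : T) a b s1 s2 :
  x \notin s1 -> x \notin s2 -> nseq a x ++ s1 = nseq b x ++ s2 ->
  a = b /\ s1 = s2.
Proof.
move=> /count_memPn x_s1 /count_memPn x_s2 eq_cat.
have eq_ab : a = b.
  have := congr1 (count_mem x) eq_cat.
  by rewrite !count_cat !count_nseq x_s1 x_s2 /= eqxx !mul1n !addn0.
split=> //; have := congr1 (drop a) eq_cat.
by rewrite {2}eq_ab !drop_size_cat ?size_nseq.
Qed.

Lemma mem_lists_upto l xs s :
  (s \in lists_upto l xs) = (size s <= l) && all [in xs] s.
Proof.
elim: l s => [|l IHl] [|x s] //=; rewrite ltnS.
apply/allpairsP/idP => [[[y s'] [/= y_xs s'_l [-> ->]]] | ].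
  by rewrite y_xs -IHl.
by case/andP=> s_l /andP[x_xs s_xs]; exists (x, s); rewrite /= IHl s_l.
Qed.

Lemma lists_upto_uniq l xs : uniq xs -> uniq (lists_upto l xs).
Proof.
move=> xs_uniq; elim: l => //= l IHl.
rewrite allpairs_uniq // ?andbT; first by apply/allpairsP => -[[x s] []].
by move=> [x s] [y s'] _ _ /= [-> ->].
Qed.

Lemma modn_expS_digit m n t : n %% m ^ t.+1 = digit m n t * m ^ t + n %% m ^ t.
Proof.
rewrite /digit expnS {1}(divn_eq (n %% (m * m ^ t)) (m ^ t)) -modn_divl.
by rewrite (modn_dvdm _ (dvdn_mull _ (dvdnn _))).
Qed.

Lemma digit_top m n j : 0 < m -> n < m ^ j.+1 -> digit m n j = n %/ m ^ j.
Proof.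
by move=> m_gt0 n_lt; rewrite /digit modn_small // ltn_divLR ?expn_gt0 ?m_gt0 -?expnS.
Qed.

Section MaryPartitions.

Variable m : nat.

Definition powers_upto t := [seq m ^ i | i <- iota 0 t.+1].

Lemma mem_powers_upto t x :
  reflect (exists2 i, i <= t & x = m ^ i) (x \in powers_upto t).
Proof.
apply: (iffP mapP) => -[i]; rewrite ?mem_iota => i_le ->; exists i => //.
by rewrite mem_iota.
Qed.

Lemma mem_powers_upto_top t : m ^ t \in powers_upto t.
Proof. by apply/mem_powers_upto; exists t. Qed.

Lemma mem_powers_uptoS t x : x \in powers_upto t -> x \in powers_upto t.+1.
Proof.
by case/mem_powers_upto=> i i_le ->; apply/mem_powers_upto; exists i => //; apply: leqW.
Qed.

Lemma mem_powers_upto_neq_top t x :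
  x \in powers_upto t.+1 -> x != m ^ t.+1 -> x \in powers_upto t.
Proof.
case/mem_powers_upto=> i; rewrite leq_eqVlt => /predU1P[-> | i_lt ->].
  by move=> ->; rewrite eqxx.
by move=> _; apply/mem_powers_upto; exists i.
Qed.

Fixpoint mary_parts t N : seq (seq nat) :=
  if t is t'.+1 then
    [seq nseq a (m ^ t) ++ s | a <- iota 0 (N %/ m ^ t).+1,
                               s <- mary_parts t' (N - a * m ^ t)]
  else [:: nseq N 1].

Lemma mary_partsS t N : mary_parts t.+1 N =
  [seq nseq a (m ^ t.+1) ++ s | a <- iota 0 (N %/ m ^ t.+1).+1,
                                s <- mary_parts t (N - a * m ^ t.+1)].
Proof. by []. Qed.

Lemma size_mary_partsS t N : size (mary_parts t.+1 N) =
  \sum_(0 <= a < (N %/ m ^ t.+1).+1) size (mary_parts t (N - a * m ^ t.+1)).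
Proof. by rewrite mary_partsS size_allpairs_dep sumnE big_map. Qed.

Lemma size_mary_parts n t c : 0 < m ->
  size (mary_parts t (c * m ^ t + n %% m ^ t)) = nested_sum m n t c.
Proof.
move=> m_gt0; elim: t c => // t IHt c.
have r_lt : n %% m ^ t.+1 < m ^ t.+1 by rewrite ltn_pmod ?expn_gt0 ?m_gt0.
rewrite size_mary_partsS divnMDl ?expn_gt0 ?m_gt0 // divn_small // addn0.
rewrite big_nat_rev /=; apply: eq_big_nat => a /andP[_ a_lt].
rewrite -IHt add0n subSS; congr (size (mary_parts _ _)).
have a_le : a <= c by rewrite -ltnS.
rewrite modn_expS_digit expnS -[c in LHS](subnK a_le).
nia.
Qed.

Hypothesis m_gt1 : 1 < m.

Lemma powers_upto_ltn t x : x \in powers_upto t -> x < m ^ t.+1.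
Proof. by case/mem_powers_upto=> i i_le ->; rewrite ltn_exp2l. Qed.

Lemma sorted_powers_upto_split t s :
    sorted geq s -> all [in powers_upto t.+1] s ->
  exists a s', s = nseq a (m ^ t.+1) ++ s' /\ all [in powers_upto t] s'.
Proof.
elim: s => [|y s IHs] s_sorted; first by exists 0, [::].
case/andP=> y_pow s_pow.
have [a [s' [s_eq s'_pow]]] := IHs (path_sorted s_sorted) s_pow.
have [-> | y_neq] := eqVneq y (m ^ t.+1); first by exists a.+1, s'; rewrite s_eq.
have y_pow' := mem_powers_upto_neq_top y_pow y_neq.
have y_ge : all (geq y) s := order_path_min (rev_trans leq_trans) s_sorted.
exists 0, (y :: s); split=> //=; rewrite y_pow' /=.
apply/allP=> z z_in; apply: mem_powers_upto_neq_top; first exact: (allP s_pow).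
by rewrite neq_ltn (leq_ltn_trans (allP y_ge z z_in)) ?powers_upto_ltn.
Qed.

Lemma mem_mary_parts t N s :
  (s \in mary_parts t N) =
  [&& sorted geq s, all [in powers_upto t] s & sumn s == N].
Proof.
have m_gt0 : 0 < m by apply: ltnW.
elim: t N s => [|t IHt] N s.
  rewrite inE; apply/eqP/and3P => [-> | [_ s_ones /eqP <-]].
    rewrite -[nseq N 1]cats0 sorted_geq_nseq_cat // cats0 all_nseq /=.
    by rewrite inE eqxx orbT sumn_nseq mul1n.
  have /all_pred1P -> : all (pred1 1) s.
    by apply: sub_all s_ones => z /mem_powers_upto[i]; rewrite leqn0 => /eqP-> ->.
  by rewrite sumn_nseq mul1n.
rewrite mary_partsS; apply/allpairsPdep/and3P.
  case=> a [s' [a_in s'_in ->]].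
  move: s'_in; rewrite IHt => /and3P[s'_sorted s'_pow /eqP s'_sum].
  move: a_in; rewrite mem_iota add0n ltnS leq_divRL ?expn_gt0 ?m_gt0 // => a_le.
  split.
  - apply: sorted_geq_nseq_cat => //.
    by apply: sub_all s'_pow => z /powers_upto_ltn /ltnW.
  - rewrite all_cat all_nseq mem_powers_upto_top orbT /=.
    by apply: sub_all s'_pow => z /mem_powers_uptoS.
  - by rewrite sumn_cat sumn_nseq s'_sum mulnC subnKC.
case=> s_sorted s_pow /eqP s_sum.
have [a [s' [s_eq s'_pow]]] := sorted_powers_upto_split s_sorted s_pow.
have sum_eq : a * m ^ t.+1 + sumn s' = N by rewrite -s_sum s_eq sumn_cat sumn_nseq mulnC.
exists a, s'; split=> //.
  by rewrite mem_iota ltnS leq_divRL ?expn_gt0 ?m_gt0 // -sum_eq leq_addr.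
move: s_sorted; rewrite s_eq => /cat_sorted2[_ s'_sorted].
by rewrite IHt s'_sorted s'_pow -sum_eq addKn /=.
Qed.

Lemma mary_parts_uniq t N : uniq (mary_parts t N).
Proof.
elim: t N => // t IHt N; rewrite mary_partsS.
apply: allpairs_uniq_dep => [|a _|]; [exact: iota_uniq | exact: IHt |].
have top_notin N' s : s \in mary_parts t N' -> m ^ t.+1 \notin s.
  rewrite mem_mary_parts => /and3P[_ s_pow _].
  by apply/negP=> /(allP s_pow) /powers_upto_ltn; rewrite ltnn.
move=> _ _ /allpairsPdep[a [s1 [_ s1_in ->]]] /allpairsPdep[b [s2 [_ s2_in ->]]] /=.
by case/nseq_cat_inj; rewrite ?(top_notin _ _ s1_in) ?(top_notin _ _ s2_in) // => -> ->.
Qed.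

End MaryPartitions.

Lemma mem_powers_upto_is_pow m j x : 1 < m -> x < m ^ j.+1 ->
  (x \in powers_upto m j) = (0 < x) && is_pow m x.
Proof.
move=> m_gt1 x_lt; apply/mem_powers_upto/andP => [[i i_le ->] | [_]].
  rewrite expn_gt0 ltnW //; split=> //; apply/existsP.
  by exists (Ordinal (ltnW (ltn_expl i m_gt1) : i < (m ^ i).+1)).
case/existsP=> i /eqP x_eq; exists i => //.
by rewrite -ltnS -(ltn_exp2l _ _ m_gt1) -x_eq.
Qed.

Lemma b_size_mary_parts m n j : 1 < m -> n < m ^ j.+1 ->
  b m n = size (mary_parts m j n).
Proof.
move=> m_gt1 n_lt; rewrite /b -size_filter; apply: perm_size.
apply: uniq_perm; first exact/filter_uniq/lists_upto_uniq/iota_uniq.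
  exact: mary_parts_uniq.
move=> s; rewrite mem_filter mem_mary_parts // /is_mary_partition.
have [s_sum | ] := eqVneq (sumn s) n; last by rewrite !andbF.
have -> : all [in powers_upto m j] s = all (fun x => 0 < x) s && all (is_pow m) s.
  rewrite -all_predI; apply: eq_in_all => x x_in /=.
  apply: mem_powers_upto_is_pow => //.
  by apply: leq_ltn_trans n_lt; rewrite -s_sum leq_sumn_mem.
apply/andP/and3P => [[/and4P[-> -> _ ->] _] | [s_sorted /andP[s_pos s_is_pow] _]] //.
rewrite s_sorted s_pos s_is_pow mem_lists_upto -{1}s_sum size_le_sumn //.
split=> //; apply/allP=> x x_in.
by rewrite mem_iota add1n ltnS -s_sum leq_sumn_mem // (allP s_pos).
Qed.

Theorem theorem1p2 (m n j : nat) :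
  2 <= m -> m ^ j <= n < m ^ j.+1 ->
  b m n = nested_sum m n j (digit m n j).
Proof.
move=> m_gt1 /andP[_ n_lt]; have m_gt0 := ltnW m_gt1.
rewrite (b_size_mary_parts m_gt1 n_lt) (digit_top m_gt0 n_lt).
by rewrite -size_mary_parts // -divn_eq.
Qed.
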